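(* Let $p$ be a constant prime and let $F_n = GF(p^{r_n})$ be a sequence of finite fields. Given an element $x \in F_n$, it is possible to compute the multiplicative inverse of $x$ (when $x \neq 0$) in additional space $4 r_n + O(\log r_n)$, counting the space needed to store the irreducible polynomial used to represent $F_n$.
   Context: Elements of $GF(p^{r_n})$ are represented as polynomials over $GF(p)$ of degree less than $r_n$, with arithmetic performed modulo a fixed irreducible polynomial of degree $r_n$ over $GF(p)$. Space is measured on a deterministic space-bounded Turing machine. *)

From mathcomp Require Import all_boot all_algebra.
Set Implicit Arguments. Unset Strict Implicit. Unset Printing Implicit Defensive.
Import GRing.Theory.
Local Open Scope ring_scope.

Inductive move := MoveL | MoveN | MoveR.

Definition move_nat (m : move) (n : nat) : nat :=
  match m with MoveL => n.-1 | MoveN => n | MoveR => n.+1 end.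

(* A deterministic Turing machine with
   - a read-only two-way input tape over 'F_p with endmarkers (read as None),
   - [tm_tapes] work tapes whose cells hold elements of 'F_p
     (so one cell stores exactly one coefficient, no alphabet compression),
   - a write-only one-way output tape over 'F_p.
   A transition returning None means "halt". *)
Record TM (p : nat) := {
  tm_state : finType;
  tm_tapes : nat;
  tm_start : tm_state;
  tm_delta : tm_state -> option 'F_p -> ('I_tm_tapes -> 'F_p) ->
             option (tm_state * move * ('I_tm_tapes -> 'F_p * move) * option 'F_p)
}.

Record config (p : nat) (M : TM p) := {
  c_state : tm_state M;
  c_in : nat;
  c_tape : 'I_(tm_tapes M) -> nat -> 'F_p;
  c_pos : 'I_(tm_tapes M) -> nat;
  c_out : seq 'F_p
}.

(* The input tape for an element x of GF(p^r) (a polynomial of size <= r):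
   cell 0 and cell r+1 are endmarkers, cell i (1 <= i <= r) holds x`_(i-1). *)
Definition input_sym (p r : nat) (x : {poly 'F_p}) (i : nat) : option 'F_p :=
  if (0 < i <= r)%N then Some x`_(i.-1) else None.

Definition step (p : nat) (M : TM p) (r : nat) (x : {poly 'F_p})
  (c : config M) : option (config M) :=
  match tm_delta (c_state c) (input_sym r x (c_in c))
                 (fun j => c_tape c j (c_pos c j)) with
  | None => None
  | Some (s', mi, w, o) =>
      Some {| c_state := s';
              c_in := minn r.+1 (move_nat mi (c_in c));
              c_tape := fun j n => if n == c_pos c j then (w j).1 else c_tape c j n;
              c_pos := fun j => move_nat (w j).2 (c_pos c j);
              c_out := if o is Some a then rcons (c_out c) a else c_out c |}
  end.

(* Initial configuration: the irreducible polynomial f (monic, degree r) is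
   stored in the workspace: work tape 0 holds f`_0, ..., f`_(r-1) in cells
   0..r-1 (all other cells hold 0). *)
Definition init_config (p : nat) (M : TM p) (r : nat) (f : {poly 'F_p})
  : config M :=
  {| c_state := tm_start M;
     c_in := 0;
     c_tape := fun j n => if (val j == 0)%N && (n < r)%N then f`_n else 0;
     c_pos := fun _ => 0%N;
     c_out := [::] |}.

Fixpoint run (p : nat) (M : TM p) (r : nat) (f x : {poly 'F_p}) (t : nat)
  : option (config M) :=
  match t with
  | 0 => Some (init_config M r f)
  | t'.+1 => obind (step r x) (run M r f x t')
  end.

From HB Require Import structures.
From mathcomp Require Import all_boot all_algebra zify.
Set Implicit Arguments. Unset Strict Implicit. Unset Printing Implicit Defensive.
Import GRing.Theory.
Local Open Scope ring_scope.

(* The machine finds x^-1 by exhaustive search.  Work tape 0 holds f, tape 1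
   a candidate y, enumerated by a base-p counter, tape 2 the product x y mod f,
   accumulated by Horner's rule z := z X + y_i x mod f over the digits of y
   from the top, and tape 3 a one-cell marker selecting the current digit y_i.
   All heads move in lockstep with the input head, sweeping between the two
   endmarkers, so each work tape uses r + 2 cells.  As f is irreducible, x has
   an inverse of degree < r; the counter reaches it, and the machine then
   copies it to the output. *)

Section Counter.
Variable p : nat.
Local Notation F := 'F_p.

(* Little-endian base-p counter: [incr true s] adds one to the number with
   digits [s], dropping the final carry. *)
Fixpoint incr (cy : bool) (s : seq F) : seq F :=
  if s is a :: s' then (if cy then a + 1 else a) :: incr (cy && (a == -1)) s'
  else [::].

Fixpoint carry (cy : bool) (s : seq F) (k : nat) {struct k} : bool :=
  if k is k'.+1 then
    if s is a :: s' then carry (cy && (a == -1)) s' k' else cy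
  else cy.

Lemma size_incr cy s : size (incr cy s) = size s.
Proof. by elim: s cy => //= a s IH cy; rewrite IH. Qed.

Lemma size_iter_incr k s : size (iter k (incr true) s) = size s.
Proof. by elim: k => //= k IH; rewrite size_incr IH. Qed.

Lemma incr_false s : incr false s = s.
Proof. by elim: s => //= a s ->. Qed.

Lemma nth_incr cy s k : (k < size s)%N ->
  nth 0 (incr cy s) k = if carry cy s k then nth 0 s k + 1 else nth 0 s k.
Proof. by elim: s cy k => [|a s IH] cy [|k] //= /IH. Qed.

Lemma carryS cy s k : (k < size s)%N ->
  carry cy s k.+1 = carry cy s k && (nth 0 s k == -1).
Proof. by elim: s cy k => [|a s IH] cy [|k] //= ltks; apply: IH. Qed.

Hypothesis p_pr : prime p.

Lemma iter_incr_digit j s : (j < p)%N -> iter j (incr true) (0 :: s) = j%:R :: s.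
Proof.
elim: j => [|j IH] ltjp //=.
rewrite IH ?(ltnW ltjp) //= natr1.
have -> : (j%:R == -1 :> F) = false.
  by rewrite -addr_eq0 natr1 -(dvdn_pcharf (pchar_Fp p_pr)) gtnNdvd.
by rewrite incr_false.
Qed.

Lemma iter_incr_p s : iter p (incr true) (0 :: s) = 0 :: incr true s.
Proof.
have p_gt0 := prime_gt0 p_pr.
transitivity (iter p.-1.+1 (incr true) (0 :: s)); first by rewrite prednK.
rewrite iterS iter_incr_digit ?prednK //=.
have -> : ((p.-1)%:R == -1 :> F) by rewrite -addr_eq0 natr1 prednK // pchar_Fp_0.
by rewrite natr1 prednK // pchar_Fp_0.
Qed.

Lemma iter_incr_mulp k s :
  iter (k * p) (incr true) (0 :: s) = 0 :: iter k (incr true) s.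
Proof. by elim: k => //= k IH; rewrite mulSn iterD IH iter_incr_p. Qed.

Lemma iter_incr_surj (t : seq F) : exists k, iter k (incr true) (nseq (size t) 0) = t.
Proof.
elim: t => [|b t [k iter_k]]; first by exists 0%N.
exists (nat_of_ord b + k * p)%N.
have ltbp : (nat_of_ord b < p)%N by have := ltn_ord b; have := Fp_cast p_pr; lia.
by rewrite iterD /= iter_incr_mulp iter_k iter_incr_digit // natr_Zp.
Qed.

End Counter.

Lemma irreducible_modp_inverse (F : fieldType) (f x : {poly F}) :
  irreducible_poly f -> (size x < size f)%N -> x != 0 ->
  exists y : {poly F}, (size y < size f)%N /\ x * y %% f = 1.
Proof.
move=> irr_f sx x0.
have : coprimep f x.
  rewrite irreducible_poly_coprime //; apply/negP => /(dvdp_leq x0).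
  by rewrite leqNgt sx.
case/Bezout_eq1_coprimepP => [[u v]] /= uv.
exists (v %% f); split; first by rewrite ltn_modp -size_poly_gt0; case: irr_f; lia.
have small1 : (size (1%R : {poly F}) < size f)%N by rewrite size_poly1; case: irr_f.
by rewrite modp_mul -(modp_small small1) -uv modpD modp_mull add0r mulrC.
Qed.

Section Horner.
Variables (F : fieldType) (r : nat) (f x : {poly F}).
Hypotheses (r_gt0 : (0 < r)%N) (size_f : size f = r.+1) (f_monic : f \is monic).
Hypothesis size_x : (size x <= r)%N.

(* Multiplying by ['X] modulo the monic [f] only subtracts the leading
   coefficient of [z] times [f]. *)
Definition horner_step (z : {poly F}) (a : F) := z * 'X - z`_r.-1 *: f + a *: x.

Lemma coef_horner_step z a n : (horner_step z a)`_n =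
  (if n == 0%N then 0 else z`_n.-1) - z`_r.-1 * f`_n + a * x`_n.
Proof. by rewrite coefD coefB coefMX !coefZ. Qed.

Lemma horner_step_r z a : (horner_step z a)`_r = 0.
Proof.
have f_r : f`_r = 1 by move/monicP: f_monic; rewrite lead_coefE size_f.
rewrite coef_horner_step f_r (nth_default 0 size_x) mulr0 addr0 mulr1.
by rewrite -[r]prednK // subrr.
Qed.

Lemma size_horner_step (z : {poly F}) a :
  (size z <= r)%N -> (size (horner_step z a) <= r)%N.
Proof.
move=> sz; apply/leq_sizeP => j; rewrite leq_eqVlt => /predU1P [<-|ltrj].
  exact: horner_step_r.
have [zj fj xj] : [/\ size z <= j.-1, size f <= j & size x <= j]%N.
  by rewrite size_f; split; lia.
rewrite coef_horner_step (nth_default 0 zj) (nth_default 0 fj) (nth_default 0 xj).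
by rewrite if_same mulr0 subr0 mulr0 addr0.
Qed.

Lemma horner_stepE (z : {poly F}) a : (size z <= r)%N ->
  horner_step z a = (z * 'X + a *: x) %% f.
Proof.
move=> sz; rewrite -(modp_small (_ : size (horner_step z a) < size f)%N).
  by rewrite /horner_step addrAC -scaleNr modpD modpZl modpp scaler0 addr0.
by rewrite size_f ltnS size_horner_step.
Qed.

Definition partial_prod (s : seq F) m := x * Poly (drop m s) %% f.

Lemma size_partial_prod s m : (size (partial_prod s m) <= r)%N.
Proof. by rewrite -ltnS -size_f ltn_modp -size_poly_gt0 size_f. Qed.

Lemma horner_step_partial s m : (0 < m)%N ->
  horner_step (partial_prod s m) (nth 0 s m.-1) = partial_prod s m.-1.
Proof.
move=> m_gt0; rewrite horner_stepE ?size_partial_prod // /partial_prod.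
have -> : Poly (drop m.-1 s) = Poly (drop m s) * 'X + (nth 0 s m.-1)%:P.
  case: (ltnP m.-1 (size s)) => sm.
    by rewrite (drop_nth 0 sm) prednK //= cons_poly_def.
  by rewrite !drop_oversize ?nth_default //= ?mul0r ?add0r //; lia.
rewrite mulrDr mulrA [x * _%:P]mulrC mul_polyC modpD [in RHS]modpD.
by rewrite [_ %% f * 'X]mulrC modp_mul mulrC.
Qed.

Lemma partial_prod_oversize s m : (size s <= m)%N -> partial_prod s m = 0.
Proof. by move=> sm; rewrite /partial_prod drop_oversize // mulr0 mod0p. Qed.

End Horner.

Lemma poly_eq1_coefs (F : nzRingType) (r : nat) (z : {poly F}) : (size z <= r)%N ->
  (all (fun i => z`_i == 0) (iota 1 r) && (z`_0 == 1)) = (z == 1).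
Proof.
move=> sz; apply/idP/eqP => [/andP [/allP z_hi /eqP z0]|->].
  apply/polyP => -[|i]; rewrite coef1 //=.
  case: (leqP i.+1 r) => ir; first by apply/eqP/z_hi; rewrite mem_iota; lia.
  by rewrite nth_default // (leq_trans sz (ltnW ir)).
rewrite [(1 : {poly _})`_0]coef1 eqxx andbT.
by apply/allP => -[|i]; rewrite mem_iota coef1.
Qed.

Section Machine.
Variable p : nat.
Local Notation F := 'F_p.

(* The control state is a sweep direction together with a [phase]:
   - [Incr cy] (rightward): add the carry [cy] to the candidate y on tape 1,
     clearing tapes 2 and 3;
   - [Mul first a lead xprev marked ynext] (leftward): write the coefficients
     of [horner_step z a] on tape 2, one cell too low, where [lead] is the top
     coefficient of z and [xprev] the input symbol one cell to the right;
     meanwhile move the marker on tape 3 one cell left and record in [ynext]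
     the digit of y under its new position;
   - [Shift zprev ynext last] (rightward): shift tape 2 one cell up; [last]
     records that the digit just used was y_0;
   - [Check ok zprev] (leftward): test whether z = 1;
   - [Emit] (rightward): copy y to the output. *)
Inductive phase :=
  | Incr of bool
  | Mul of bool & F & F & F & bool & F
  | Shift of F & F & bool
  | Check of bool & F
  | Emit.

Definition phase_code (q : phase) : 'I_5 * (F * F * F * F) * (bool * bool) :=
  match q with
  | Incr cy => (@Ordinal 5 0 isT, (0, 0, 0, 0), (cy, false))
  | Mul b a c u m y => (@Ordinal 5 1 isT, (a, c, u, y), (b, m))
  | Shift z y b => (@Ordinal 5 2 isT, (z, y, 0, 0), (b, false))
  | Check b z => (@Ordinal 5 3 isT, (z, 0, 0, 0), (b, false))
  | Emit => (@Ordinal 5 4 isT, (0, 0, 0, 0), (false, false))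
  end.

Definition phase_decode (t : 'I_5 * (F * F * F * F) * (bool * bool)) : option phase :=
  let: (i, (a, c, u, y), (b, m)) := t in
  Some (match val i with
        | 0 => Incr b | 1 => Mul b a c u m y | 2 => Shift a c b
        | 3 => Check b a | _ => Emit
        end).

Lemma phase_codeK : pcancel phase_code phase_decode. Proof. by case. Qed.
HB.instance Definition _ := Finite.copy phase (pcan_type phase_codeK).

Definition phase_step (q : phase) (sym : option F) (f_h y_h z_h m_h : F)
  : option (phase * F * F * F * option F) :=
  match q, sym with
  | Incr cy, Some _ =>
      Some (Incr (cy && (y_h == -1)), (if cy then y_h + 1 else y_h), 0, 0, None)
  | Incr _, None => Some (Mul true 0 0 0 true 0, y_h, z_h, m_h, None)
  | Mul first a lead xprev marked ynext, Some x_h =>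
      Some (Mul false a (if first then z_h else lead) x_h (~~ marked && (m_h == 1))
              (if marked then y_h else ynext),
            y_h, (if first then 0 else z_h - lead * f_h + a * xprev), marked%:R, None)
  | Mul _ a lead xprev marked ynext, None =>
      Some (Shift (- (lead * f_h) + a * xprev) ynext marked, y_h, z_h, m_h, None)
  | Shift zprev ynext last, Some _ => Some (Shift z_h ynext last, y_h, zprev, m_h, None)
  | Shift _ ynext last, None =>
      Some (if last then Check true 0 else Mul true ynext 0 0 false 0,
            y_h, z_h, m_h, None)
  | Check ok zprev, Some _ => Some (Check (ok && (zprev == 0)) z_h, y_h, z_h, m_h, None)
  | Check ok zprev, None =>
      Some (if ok && (zprev == 1) then Emit else Incr true, y_h, z_h, m_h, None)
  | Emit, Some _ => Some (Emit, y_h, z_h, m_h, Some y_h)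
  | Emit, None => None
  end.

Definition move_dir (right : bool) := if right then MoveR else MoveL.

Definition tape_f : 'I_4 := @Ordinal 4 0 isT.
Definition tape_y : 'I_4 := @Ordinal 4 1 isT.
Definition tape_z : 'I_4 := @Ordinal 4 2 isT.
Definition tape_mark : 'I_4 := @Ordinal 4 3 isT.

Definition inv_delta (s : bool * phase) (sym : option F) (v : 'I_4 -> F)
  : option ((bool * phase) * move * ('I_4 -> F * move) * option F) :=
  if phase_step s.2 sym (v tape_f) (v tape_y) (v tape_z) (v tape_mark)
    is Some (q', w_y, w_z, w_m, o) then
    let d' := if sym is None then ~~ s.1 else s.1 in
    Some ((d', q'), move_dir d',
          (fun j : 'I_4 => (nth 0 [:: v tape_f; w_y; w_z; w_m] j, move_dir d')), o)
  else None.

Definition inv_machine : TM p :=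
  {| tm_state := (bool * phase)%type; tm_tapes := 4;
     tm_start := (false, Check false 0); tm_delta := inv_delta |}.

End Machine.

Arguments Incr {p} _.
Arguments Emit {p}.

Section Runs.
Variables (p : nat) (M : TM p) (r : nat) (x : {poly 'F_p}).
Local Notation step := (@step p M r x).

Fixpoint run_from (c : config M) (n : nat) : option (config M) :=
  if n is n'.+1 then obind step (run_from c n') else Some c.

Lemma run_run_from f t : run M r f x t = run_from (init_config M r f) t.
Proof. by elim: t => //= t ->. Qed.

Lemma run_fromD c n m : run_from c (n + m) = obind (run_from^~ m) (run_from c n).
Proof.
elim: m => [|m IH]; first by rewrite addn0; case: (run_from c n).
by rewrite addnS /= IH; case: (run_from c n).
Qed.

Definition reach (c c' : config M) := exists n, run_from c n = Some c'.

Lemma reach_refl c : reach c c.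
Proof. by exists 0%N. Qed.

Lemma reach_trans c1 c2 c3 : reach c1 c2 -> reach c2 c3 -> reach c1 c3.
Proof. by move=> [n Hn] [m Hm]; exists (n + m); rewrite run_fromD Hn. Qed.

Lemma reach_step c c' : step c = Some c' -> reach c c'.
Proof. by exists 1%N. Qed.

Lemma reach_iter (P : nat -> config M -> Prop) n c (Q : config M -> Prop) :
  (forall k c, (k < n)%N -> P k c -> exists c', reach c c' /\ P k.+1 c') ->
  P 0%N c -> (forall c', P n c' -> Q c') -> exists c', reach c c' /\ Q c'.
Proof.
move=> Pstep P0 PQ.
suff [c' [R' Pc']] : exists c', reach c c' /\ P n c' by exists c'; split; last exact: PQ.
elim: n {PQ} Pstep => [|n IH] Pstep; first by exists c; split=> //; apply: reach_refl.
have [c1 [R1 P1]] := IH (fun k c' ltkn => Pstep k c' (ltnW ltkn)).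
have [c2 [R2 P2]] := Pstep n c1 (ltnSn n) P1.
by exists c2; split=> //; apply: reach_trans R1 R2.
Qed.

End Runs.

Section Heads.
Variables (p r : nat) (f x : {poly 'F_p}).
Local Notation cfg := (config (inv_machine p)).
Local Notation step := (@step p (inv_machine p) r x).
Local Notation run_from := (@run_from p (inv_machine p) r x).

Definition heads_in_sync (c : cfg) :=
  [/\ (c_in c <= r.+1)%N, (forall j, c_pos c j = c_in c)
    & (c_in c = r.+1 -> (c_state c).1 = true)].

Lemma move_dir_bounded h d : (h <= r.+1)%N -> (h = r.+1 -> d = true) ->
  let d' := if input_sym r x h is None then ~~ d else d in
  (move_nat (move_dir d') h <= r.+1)%N /\ (move_nat (move_dir d') h = r.+1 -> d' = true).
Proof.
move=> le_h_r1 end_d; rewrite /input_sym.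
case: ifP => [/andP [h_gt0 le_hr]|/negbT h_out]; first by case: d {end_d} => /=; lia.
have [->|h_r1] : h = 0%N \/ h = r.+1 by lia.
  by case: d {end_d} => /=; lia.
by rewrite h_r1 end_d //=; lia.
Qed.

Lemma heads_in_sync_step c c' :
  heads_in_sync c -> step c = Some c' -> heads_in_sync c'.
Proof.
case: c => [[d q] h tp ps o] [/= le_h_r1 pos_h end_d].
rewrite /step /= /inv_delta /=.
case: phase_step => [[[[[q' w_y] w_z] w_m] o']|] //= [<-] /=.
have [le_h' end_d'] := move_dir_bounded le_h_r1 end_d.
by rewrite (minn_idPr le_h'); split=> //= j; rewrite pos_h.
Qed.

Lemma heads_in_sync_run_from c n c' :
  heads_in_sync c -> run_from c n = Some c' -> heads_in_sync c'.
Proof.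
elim: n c' => [|n IH] c' sync_c /=; first by case=> <-.
case E: run_from => [c1|] //=; exact: heads_in_sync_step (IH _ sync_c E).
Qed.

Lemma run_heads_le t c : run (inv_machine p) r f x t = Some c ->
  forall j, (c_pos c j <= r.+1)%N.
Proof.
rewrite run_run_from => /heads_in_sync_run_from.
by case=> [|le_in pos _ j]; [split | rewrite pos].
Qed.

End Heads.

Section InverseMachine.
Variables (p r : nat) (f x : {poly 'F_p}).
Hypotheses (r_gt0 : (0 < r)%N) (size_f : size f = r.+1) (f_monic : f \is monic).
Hypothesis size_x : (size x <= r)%N.
Local Notation F := 'F_p.
Local Notation cfg := (config (inv_machine p)).
Local Notation step := (@step p (inv_machine p) r x).
Local Notation run_from := (@run_from p (inv_machine p) r x).
Local Notation reach := (@reach p (inv_machine p) r x).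
Local Notation horner_step := (horner_step r f x).
Local Notation horner_step_r := (horner_step_r r_gt0 size_f f_monic size_x).
Local Notation horner_step_partial := (horner_step_partial r_gt0 size_f f_monic size_x).
Local Notation partial_prod := (partial_prod f x).

Definition f_cell n : F := if (n < r)%N then f`_n else 0.

(* All heads are on cell [h]; tapes 1-3 hold [Y], [Z], [Mk] on the cells
   [1 <= n <= r], while cells 0 and r+1, under the endmarkers, are scratch. *)
Definition cfg_spec (c : cfg) h d q (Y Z Mk : nat -> F) (O : seq F) :=
  [/\ c_state c = (d, q), c_in c = h, forall j, c_pos c j = h,
      forall n, c_tape c tape_f n = f_cell n
    & forall n, (0 < n <= r)%N -> [/\ c_tape c tape_y n = Y n,
        c_tape c tape_z n = Z n & c_tape c tape_mark n = Mk n]]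
  /\ c_out c = O.

Lemma cfg_spec_congr c h d q Y Z Mk O h' q' Y' Z' Mk' O' :
  cfg_spec c h d q Y Z Mk O -> h = h' -> q = q' -> O = O' ->
  (forall n, (0 < n <= r)%N -> [/\ Y n = Y' n, Z n = Z' n & Mk n = Mk' n]) ->
  cfg_spec c h' d q' Y' Z' Mk' O'.
Proof.
move=> [[st h_in pos tf tape] out] <- <- <- eqYZM; split=> //; split=> // n n_in.
by have [<- <- <-] := eqYZM n n_in; apply: tape.
Qed.

Definition upd (Y : nat -> F) h w n := if n == h then w else Y n.
Definition add_out (O : seq F) (o : option F) := if o is Some a then rcons O a else O.

Lemma upd_id (Y : nat -> F) h n : upd Y h (Y h) n = Y n.
Proof. by rewrite /upd; case: eqP => // ->. Qed.

Lemma step_inner c h d q Y Z Mk O q' w_y w_z w_m o :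
  cfg_spec c h d q Y Z Mk O -> (0 < h <= r)%N ->
  phase_step q (Some x`_h.-1) (f_cell h) (Y h) (Z h) (Mk h) =
    Some (q', w_y, w_z, w_m, o) ->
  exists c', step c = Some c' /\
    cfg_spec c' (if d then h.+1 else h.-1) d q' (upd Y h w_y) (upd Z h w_z) (upd Mk h w_m)
      (add_out O o).
Proof.
case: c => [s h0 tp ps oc] [[/= -> -> pos tf tape] /= out] h_in act.
have [ty tz tm] := tape h h_in.
rewrite /step /= /inv_delta /= !pos tf ty tz tm /input_sym h_in act /=.
eexists; split; first reflexivity.
split; [split=> //= | by rewrite out].
- by case/andP: h_in => *; case: d {act} => /=; apply/minn_idPr; lia.
- by move=> j; rewrite pos; case: d {act}.
- by move=> n; rewrite pos tf; case: eqP => // ->.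
- move=> n n_in; have [uy uz um] := tape n n_in.
  by rewrite !pos /upd uy uz um; case: eqP.
Qed.

Lemma step_right_end c q Y Z Mk O q' o :
  cfg_spec c r.+1 true q Y Z Mk O ->
  (forall v_f v_y v_z v_m, exists w_y w_z w_m,
     phase_step q None v_f v_y v_z v_m = Some (q', w_y, w_z, w_m, o)) ->
  exists c', step c = Some c' /\ cfg_spec c' r false q' Y Z Mk (add_out O o).
Proof.
case: c => [s h0 tp ps oc] [[/= -> -> pos tf tape] /= out] act.
rewrite /step /= /inv_delta /= !pos /input_sym ltnn andbF.
have [w_y [w_z [w_m ->]]] :=
  act (tp tape_f r.+1) (tp tape_y r.+1) (tp tape_z r.+1) (tp tape_mark r.+1).
eexists; split; first reflexivity.
split; [split=> //= | by rewrite out].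
- exact/minn_idPr.
- by move=> j; rewrite pos.
- by move=> n; rewrite pos tf; case: eqP => // ->.
- move=> n n_in; have [uy uz um] := tape n n_in.
  have /negbTE n_r1 : n != r.+1 by lia.
  by rewrite !pos uy uz um n_r1.
Qed.

Lemma step_left_end c q Y Z Mk O q' o :
  cfg_spec c 0 false q Y Z Mk O ->
  (forall v_y v_z v_m, exists w_y w_z w_m,
     phase_step q None (f_cell 0) v_y v_z v_m = Some (q', w_y, w_z, w_m, o)) ->
  exists c', step c = Some c' /\ cfg_spec c' 1 true q' Y Z Mk (add_out O o).
Proof.
case: c => [s h0 tp ps oc] [[/= -> -> pos tf tape] /= out] act.
rewrite /step /= /inv_delta /= !pos tf.
have [w_y [w_z [w_m ->]]] := act (tp tape_y 0) (tp tape_z 0) (tp tape_mark 0).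
eexists; split; first reflexivity.
split; [split=> //= | by rewrite out].
- by move=> j; rewrite pos.
- by move=> n; rewrite pos tf; case: eqP => // ->.
- move=> n n_in; have [uy uz um] := tape n n_in.
  have /negbTE n_0 : n != 0%N by lia.
  by rewrite !pos uy uz um n_0.
Qed.

Lemma step_emit_end c Y Z Mk O : cfg_spec c r.+1 true Emit Y Z Mk O -> step c = None.
Proof.
case: c => [s h0 tp ps oc] [[/= -> -> pos _ _] _].
by rewrite /step /= /inv_delta /= !pos /input_sym ltnn andbF.
Qed.

(* Unlike [f] on tape 0, sequences on tapes 1-3 are stored one cell to the
   right: entry [n - 1] in cell [n]. *)
Definition cells (s : seq F) n := nth 0 s n.-1.
Definition marker (m n : nat) : F := (n == m)%:R.

Lemma marker_eq1 m n : (marker m n == 1) = (n == m).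
Proof. by rewrite /marker; case: (n == m); rewrite ?eqxx // eq_sym oner_eq0. Qed.

Lemma incr_sweep s Z Mk O c : size s = r ->
  cfg_spec c 1 true (Incr true) (cells s) Z Mk O ->
  exists c', reach c c' /\ cfg_spec c' r.+1 true (Incr (carry true s r))
    (cells (incr true s)) (fun _ => 0) (fun _ => 0) O.
Proof.
move=> size_s spec_c.
pose P k c := cfg_spec c k.+1 true (Incr (carry true s k))
  (fun n => if (n <= k)%N then cells (incr true s) n else cells s n)
  (fun n => if (n <= k)%N then 0 else Z n) (fun n => if (n <= k)%N then 0 else Mk n) O.
apply: (@reach_iter _ _ r x P r).
- move=> k c1 lt_kr Pc1.
  have [c2 [S2 spec2]] := step_inner Pc1 (lt_kr : 0 < k.+1 <= r)%N (erefl _).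
  exists c2; split; first exact: reach_step S2.
  move: spec2; rewrite ltnn /cells /= -carryS ?size_s // => spec2.
  apply: (cfg_spec_congr spec2) => // n n_in; rewrite /upd.
  case: eqP => [->|/eqP ne]; first by rewrite leqnn /cells /= nth_incr ?size_s.
  by have -> : (n <= k.+1)%N = (n <= k)%N by lia.
- by apply: (cfg_spec_congr spec_c) => // n /andP [n_gt0 _]; rewrite leqNgt n_gt0.
- by move=> c' Pc'; apply: (cfg_spec_congr Pc') => // n /andP [_ ->].
Qed.

Section MulSweep.
Variables (s : seq F) (z : {poly F}) (m : nat) (O : seq F).
Hypothesis m_in : (0 < m <= r.+1)%N.
Local Notation a := (nth 0 s m.-1).

(* The [Mul] sweep after it has processed the cells r, ..., r - k + 1. *)
Definition mul_inv k c := exists ynext,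
  cfg_spec c (r - k) false
    (Mul (k == 0%N) a (if k == 0%N then 0 else z`_r.-1) x`_(r - k)
       (m == (r - k).+1) ynext) (cells s)
    (fun n => if (r - k < n)%N then (horner_step z a)`_n else cells z n)
    (fun n => if (r - k < n)%N then marker m.-1 n else marker m n) O
  /\ (((r - k).+1 < m)%N -> ynext = nth 0 s m.-2).

Lemma mul_inv_step k c : (k < r)%N -> mul_inv k c ->
  exists c', reach c c' /\ mul_inv k.+1 c'.
Proof.
move=> lt_kr [ynext [spec_c ynextE]].
have h_in : (0 < r - k <= r)%N by lia.
have [c' [S' spec']] := step_inner spec_c h_in (erefl _).
exists c'; split; first exact: reach_step S'.
exists (if m == (r - k).+1 then cells s (r - k) else ynext); split; last first.
  by case: eqP => [->|ne] lt; [rewrite /cells | apply: ynextE; lia].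
have h_pred : (r - k).-1 = (r - k.+1)%N by lia.
rewrite /= h_pred in spec'.
apply: (cfg_spec_congr spec') => //.
  rewrite ltnn marker_eq1; congr Mul.
    by case: eqP => [k0|//]; rewrite /cells k0 subn0.
  by apply/idP/idP; lia.
move=> n n_in; rewrite /upd; case: eqP => [->|ne]; last first.
  by have -> : (r - k.+1 < n)%N = (r - k < n)%N by lia.
have -> : (r - k.+1 < r - k)%N by lia.
rewrite ltnn; split=> //.
  case: eqP => [k0|/eqP k_neq0]; first by rewrite k0 subn0 horner_step_r.
  have [/negbTE h_neq0 h_lt_r] : (r - k != 0)%N /\ (r - k < r)%N by lia.
  by rewrite coef_horner_step h_neq0 /f_cell h_lt_r.
by rewrite /marker (_ : (r - k == m.-1)%N = (m == (r - k).+1)) //; apply/eqP/eqP; lia.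
Qed.

Lemma mul_sweep c :
  cfg_spec c r false (Mul true a 0 0 (m == r.+1) 0) (cells s) (cells z) (marker m) O ->
  exists c', reach c c' /\ exists ynext,
    cfg_spec c' 0 false (Mul false a z`_r.-1 x`_0 (m == 1)%N ynext) (cells s)
      (fun n => (horner_step z a)`_n) (marker m.-1) O
    /\ ((1 < m)%N -> ynext = nth 0 s m.-2).
Proof.
move=> spec_c.
apply: (@reach_iter _ _ r x mul_inv r); first exact: mul_inv_step.
- exists 0; split; last by lia.
  rewrite subn0 (nth_default 0 size_x).
  by apply: (cfg_spec_congr spec_c) => // n /andP [_ n_le]; rewrite ltnNge n_le.
- move=> c' [ynext [spec' ynextE]]; rewrite subnn in spec' ynextE.
  exists ynext; split=> //.
  have /negbTE r_neq0 : r != 0%N by rewrite -lt0n.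
  apply: (cfg_spec_congr spec') => //; first by rewrite r_neq0.
  by move=> n /andP [n_gt0 _]; rewrite n_gt0.
Qed.

End MulSweep.

Lemma shift_sweep (w : {poly F}) ynext last Y Mk O c :
  cfg_spec c 1 true (Shift w`_0 ynext last) Y (fun n => w`_n) Mk O ->
  exists c', reach c c' /\ cfg_spec c' r.+1 true (Shift w`_r ynext last) Y (cells w) Mk O.
Proof.
move=> spec_c.
pose P k c := cfg_spec c k.+1 true (Shift w`_k ynext last) Y
  (fun n => if (n <= k)%N then w`_n.-1 else w`_n) Mk O.
apply: (@reach_iter _ _ r x P r).
- move=> k c1 lt_kr Pc1.
  have [c2 [S2 spec2]] := step_inner Pc1 (lt_kr : 0 < k.+1 <= r)%N (erefl _).
  exists c2; split; first exact: reach_step S2.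
  apply: (cfg_spec_congr spec2) => //; first by rewrite /= ltnn.
  move=> n _; rewrite !upd_id; split=> //.
  rewrite /upd; case: eqP => [->|ne]; first by rewrite leqnn.
  by have -> : (n <= k.+1)%N = (n <= k)%N by lia.
- by apply: (cfg_spec_congr spec_c) => // n /andP [n_gt0 _]; rewrite leqNgt n_gt0.
- by move=> c' Pc'; apply: (cfg_spec_congr Pc') => // n /andP [_ ->].
Qed.

Lemma horner_round s (z : {poly F}) m O c : (0 < m <= r.+1)%N ->
  cfg_spec c r false (Mul true (nth 0 s m.-1) 0 0 (m == r.+1) 0)
    (cells s) (cells z) (marker m) O ->
  exists c', reach c c' /\
    cfg_spec c' r false
      (if m == 1%N then Check true 0 else Mul true (nth 0 s m.-2) 0 0 false 0)
      (cells s) (cells (horner_step z (nth 0 s m.-1))) (marker m.-1) O.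
Proof.
move=> m_in spec_c.
have [c1 [R1 [ynext [spec1 ynextE]]]] := mul_sweep m_in spec_c.
set w := horner_step z _ in spec1 *.
have [c2 [S2 spec2]] : exists c2, step c1 = Some c2 /\
    cfg_spec c2 1 true (Shift w`_0 ynext (m == 1)%N) (cells s) (fun n => w`_n)
      (marker m.-1) O.
  apply: (step_left_end (o := None) spec1) => v_y v_z v_m; do 3 eexists.
  by rewrite /= /f_cell r_gt0 /w coef_horner_step /= add0r.
have [c3 [R3 spec3]] := shift_sweep spec2.
have [c4 [S4 spec4]] : exists c4, step c3 = Some c4 /\
    cfg_spec c4 r false (if m == 1%N then Check true 0 else Mul true ynext 0 0 false 0)
      (cells s) (cells w) (marker m.-1) O.
  by apply: (step_right_end (o := None) spec3) => v_f v_y v_z v_m; do 3 eexists.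
exists c4; split.
  apply: reach_trans R1 (reach_trans (reach_step S2) _).
  exact: reach_trans R3 (reach_step S4).
apply: (cfg_spec_congr spec4) => //.
by case: eqP => // m_neq1; rewrite ynextE //; lia.
Qed.

Definition horner_inv s O m c :=
  cfg_spec c r false
    (if m == 0%N then Check true 0 else Mul true (nth 0 s m.-1) 0 0 (m == r.+1) 0)
    (cells s) (cells (partial_prod s m)) (marker m) O.

Lemma horner_sweeps s O c : horner_inv s O r.+1 c ->
  exists c', reach c c' /\ horner_inv s O 0 c'.
Proof.
move=> inv_c.
apply: (@reach_iter _ _ r x (fun k => horner_inv s O (r.+1 - k)%N) r.+1).
- move=> k c1 lt_kr inv1.
  have m_in : (0 < r.+1 - k <= r.+1)%N by lia.
  rewrite /horner_inv ifN in inv1; last by lia.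
  have [c2 [R2 spec2]] := horner_round m_in inv1.
  exists c2; split=> //.
  rewrite horner_step_partial in spec2; last by lia.
  have -> : (r.+1 - k.+1 = (r.+1 - k).-1)%N by lia.
  apply: (cfg_spec_congr spec2) => //.
  have -> : ((r.+1 - k).-1 == 0)%N = (r.+1 - k == 1)%N by apply/eqP/eqP; lia.
  by have -> : ((r.+1 - k).-1 == r.+1)%N = false by lia.
- by rewrite subn0.
- by move=> c'; rewrite subnn.
Qed.

Lemma check_sweep (z : {poly F}) Y Mk O c : (size z <= r)%N ->
  cfg_spec c r false (Check true 0) Y (cells z) Mk O ->
  exists c', reach c c' /\
    cfg_spec c' 0 false (Check (all (fun i => z`_i == 0) (iota 1 r)) z`_0)
      Y (cells z) Mk O.
Proof.
move=> size_z spec_c.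
pose P k c := cfg_spec c (r - k) false
  (Check (all (fun i => z`_i == 0) (iota (r - k).+1 k)) z`_(r - k)) Y (cells z) Mk O.
apply: (@reach_iter _ _ r x P r).
- move=> k c1 lt_kr Pc1.
  have h_in : (0 < r - k <= r)%N by lia.
  have [c2 [S2 spec2]] := step_inner Pc1 h_in (erefl _).
  exists c2; split; first exact: reach_step S2.
  have h_pred : (r - k).-1 = (r - k.+1)%N by lia.
  apply: (cfg_spec_congr spec2) => //.
    have -> : (r - k.+1).+1 = (r - k)%N by lia.
    by rewrite /= andbC /cells h_pred.
  by move=> n _; rewrite !upd_id.
- by rewrite /P subn0 /= nth_default.
- by move=> c'; rewrite /P subnn.
Qed.

Lemma emit_sweep s Z Mk c : size s = r ->
  cfg_spec c 1 true Emit (cells s) Z Mk [::] ->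
  exists c', reach c c' /\ cfg_spec c' r.+1 true Emit (cells s) Z Mk s.
Proof.
move=> size_s spec_c.
pose P k c := cfg_spec c k.+1 true Emit (cells s) Z Mk (take k s).
apply: (@reach_iter _ _ r x P r).
- move=> k c1 lt_kr Pc1.
  have [c2 [S2 spec2]] := step_inner Pc1 (lt_kr : 0 < k.+1 <= r)%N (erefl _).
  exists c2; split; first exact: reach_step S2.
  apply: (cfg_spec_congr spec2) => //; first by rewrite /= (take_nth 0) ?size_s.
  by move=> n _; rewrite !upd_id.
- by rewrite /P take0.
- by move=> c'; rewrite /P take_oversize ?size_s.
Qed.

Definition halted_with_inverse (c : cfg) :=
  [/\ step c = None, size (c_out c) = r & x * Poly (c_out c) %% f = 1].

Definition rejected (s : seq F) (c : cfg) := x * Poly s %% f != 1 /\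
  exists ok zprev Z Mk, cfg_spec c 0 false (Check ok zprev) (cells s) Z Mk [::]
    /\ ~~ (ok && (zprev == 1)).

Lemma next_candidate s c : size s = r -> rejected s c ->
  exists c', reach c c' /\ horner_inv (incr true s) [::] r.+1 c'.
Proof.
move=> size_s [_ [ok [zprev [Z [Mk [spec_c not_ok]]]]]].
have [c1 [S1 spec1]] : exists c1, step c = Some c1 /\
    cfg_spec c1 1 true (Incr true) (cells s) Z Mk [::].
  apply: (step_left_end (o := None) spec_c) => v_y v_z v_m; do 3 eexists.
  by rewrite /= (negbTE not_ok).
have [c2 [R2 spec2]] := incr_sweep size_s spec1.
have [c3 [S3 spec3]] : exists c3, step c2 = Some c3 /\
    cfg_spec c3 r false (Mul true 0 0 0 true 0) (cells (incr true s))
      (fun _ => 0) (fun _ => 0) [::].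
  by apply: (step_right_end (o := None) spec2) => v_f v_y v_z v_m; do 3 eexists.
exists c3; split.
  exact: reach_trans (reach_step S1) (reach_trans R2 (reach_step S3)).
have size_incr_s : size (incr true s) = r by rewrite size_incr.
apply: (cfg_spec_congr spec3) => //; first by rewrite /= nth_default ?size_incr_s ?eqxx.
move=> n /andP [_ n_le]; split=> //.
  by rewrite partial_prod_oversize ?size_incr_s // /cells polyseq0 nth_nil.
have /negbTE n_r1 : n != r.+1 by lia.
by rewrite /marker n_r1.
Qed.

Lemma test_candidate s c : size s = r -> horner_inv s [::] 0 c ->
  exists c', reach c c' /\ (halted_with_inverse c' \/ rejected s c').
Proof.
move=> size_s inv_c.
have size_z := size_partial_prod x size_f s 0.
have [c1 [R1 spec1]] := check_sweep size_z inv_c.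
have z_eq1 := poly_eq1_coefs size_z; rewrite /partial_prod drop0 in z_eq1 spec1.
case: (boolP (x * Poly s %% f == 1)) => [inv_s|not_inv_s]; last first.
  exists c1; split=> //; right; split=> //.
  by do 4 eexists; split; first exact: spec1; rewrite z_eq1.
have [c2 [S2 spec2]] : exists c2, step c1 = Some c2 /\
    cfg_spec c2 1 true Emit (cells s) (cells (x * Poly s %% f)) (marker 0) [::].
  apply: (step_left_end (o := None) spec1) => v_y v_z v_m; do 3 eexists.
  by rewrite /= z_eq1 inv_s.
have [c3 [R3 spec3]] := emit_sweep size_s spec2.
exists c3; split; first exact: reach_trans R1 (reach_trans (reach_step S2) R3).
left; split; first exact: step_emit_end spec3.
  by case: spec3 => _ ->.
by case: spec3 => _ ->; apply/eqP.
Qed.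

Lemma search_step s c : size s = r -> rejected s c ->
  exists c', reach c c' /\ (halted_with_inverse c' \/ rejected (incr true s) c').
Proof.
move=> size_s rej_c.
have [c1 [R1 inv1]] := next_candidate size_s rej_c.
have [c2 [R2 inv2]] := horner_sweeps inv1.
have size_incr_s : size (incr true s) = r by rewrite size_incr.
have [c3 [R3 res3]] := test_candidate size_incr_s inv2.
by exists c3; split=> //; apply: reach_trans R1 (reach_trans R2 R3).
Qed.

Definition candidate j := iter j (incr true) (nseq r (0 : F)).

Lemma init_rejected : rejected (candidate 0) (init_config (inv_machine p) r f).
Proof.
split.
  have -> : Poly (nseq r (0 : F)) = 0.
    by apply/polyP => i; rewrite coef_Poly nth_nseq coef0 if_same.
  by rewrite mulr0 mod0p eq_sym oner_eq0.
exists false, 0, (fun _ => 0), (fun _ => 0); split=> //; split=> //; split=> // n _.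
by rewrite /cells nth_nseq if_same.
Qed.

Lemma search_progress j : exists c, reach (init_config (inv_machine p) r f) c /\
  (halted_with_inverse c \/ rejected (candidate j) c).
Proof.
elim: j => [|j [c [R [halted_c|rej_c]]]].
- by exists (init_config _ r f); split; [exact: reach_refl | right; exact: init_rejected].
- by exists c; split; [|left].
- have size_cand : size (candidate j) = r by rewrite size_iter_incr size_nseq.
  have [c' [R' res']] := search_step size_cand rej_c.
  by exists c'; split; [exact: reach_trans R R' | rewrite /candidate iterS].
Qed.

Hypotheses (p_prime : prime p) (irr_f : irreducible_poly f) (x_neq0 : x != 0).

Lemma inv_machine_halts_with_inverse :
  exists c, reach (init_config (inv_machine p) r f) c /\ halted_with_inverse c.
Proof.
have size_x_f : (size x < size f)%N by rewrite size_f ltnS.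
have [y [size_y xy1]] := irreducible_modp_inverse irr_f size_x_f x_neq0.
pose t := mkseq (fun i => y`_i) r.
have Poly_t : Poly t = y.
  apply/polyP => i; rewrite coef_Poly.
  case: (ltnP i r) => [lt_ir|le_ri]; first by rewrite nth_mkseq.
  by rewrite !nth_default ?size_mkseq // (leq_trans _ le_ri) // -ltnS -size_f.
have [k cand_k] := iter_incr_surj p_prime t.
rewrite size_mkseq in cand_k.
have [c [R [halted_c|[not_inv _]]]] := search_progress k.
  by exists c; split.
by move: not_inv; rewrite /candidate cand_k Poly_t xy1 eqxx.
Qed.

End InverseMachine.

Theorem lemmaB6 :
  forall p : nat, prime p ->
  exists (M : TM p) (C : nat),
  forall (r : nat) (f x : {poly 'F_p}),
    (0 < r)%N -> size f = r.+1 -> f \is monic -> irreducible_poly f ->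
    (size x <= r)%N -> x != 0 ->
    exists (t : nat) (c : config M) (b : 'I_(tm_tapes M) -> nat),
      [/\ (run M r f x t = Some c /\ step r x c = None),
          (size (c_out c) = r /\ (x * Poly (c_out c)) %% f = 1),
          (forall s c', (s <= t)%N -> run M r f x s = Some c' ->
             forall j, (c_pos c' j < b j)%N),
          (forall j : 'I_(tm_tapes M), val j = 0%N -> (r <= b j)%N) &
          (\sum_(j < tm_tapes M) b j <= 4 * r + C * trunc_log 2 r + C)%N].
Proof.
move=> p p_prime; exists (inv_machine p), 8%N.
move=> r f x r_gt0 size_f f_monic irr_f size_x x_neq0.
have [c [[t run_t] [halt size_out inv_out]]] :=
  inv_machine_halts_with_inverse r_gt0 size_f f_monic size_x p_prime irr_f x_neq0.
exists t, c, (fun _ => r.+2); split.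
- by rewrite run_run_from.
- by [].
- by move=> s c' _ /run_heads_le le_pos j; rewrite ltnS.
- by move=> j _; rewrite leqW.
- by rewrite sum_nat_const card_ord /=; lia.
Qed.
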